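(* Let $A\in\mathbb R^{m\times n}$, $b\in\mathbb R^m$, $p\in[0,1]^n$ and $k\in\mathbb N$, and let $\bar X_1,\dots,\bar X_k\in\{0,1\}^n$ be independent random vectors, each having independent entries with $\Pr((\bar X_l)_i=1)=p_i$. Let $\gamma(p):=\min_{j\in[m]}\{\langle A_j,p\rangle-b_j\}$, where $A_j$ is the $j$-th row of $A$, let $\gamma_+(p):=\max\{\gamma(p),0\}$, and let $\eta:=\max_{j\in[m]}\|A_j\|_2$. Then \[\phi(p,k):=\Pr\big(\exists\,l\in[k]:\ A\bar X_l\ge b\big)\ge1-\exp\!\left(-2k\left[\frac{\gamma_+^2(p)}{\eta^2}-\frac{\log m}{2}\right]_+\right),\] where $[t]_+:=\max\{t,0\}$.
   Context: $[k]=\{1,\dots,k\}$; inequalities between vectors are componentwise. *)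

From HB Require Import structures.
From mathcomp Require Import all_boot all_order all_algebra.
From mathcomp Require Import all_classical all_reals all_analysis.
Set Implicit Arguments. Unset Strict Implicit. Unset Printing Implicit Defensive.
Import Order.TTheory GRing.Theory Num.Theory.
Local Open Scope ring_scope.

Section Defs.
Variable R : realType.

(* minimum of a finite family indexed by 'I_m (0 if m = 0; only used for m > 0) *)
Definition fmin (m : nat) (f : 'I_m -> R) : R :=
  if [pick j : 'I_m] is Some j0 then \big[Num.min/f j0]_(j < m) f j else 0.

Definition pos_part (t : R) : R := Num.max t 0.

Definition rowdot m n (A : 'M[R]_(m, n)) (j : 'I_m) (x : 'I_n -> R) : R :=
  \sum_(i < n) A j i * x i.

Definition gamma_min m n (A : 'M[R]_(m, n)) (b : 'I_m -> R) (p : 'I_n -> R) : R :=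
  fmin (fun j => rowdot A j p - b j).

Definition eta_max m n (A : 'M[R]_(m, n)) : R :=
  \big[Num.max/0]_(j < m) Num.sqrt (\sum_(i < n) A j i ^+ 2).

(* probability of the outcome X = (X_1,...,X_k) in {0,1}^(k x n) when all
   entries are independent with Pr((X_l)_i = 1) = p_i (product law) *)
Definition prod_weight k n (p : 'I_n -> R) (X : {ffun 'I_k -> {ffun 'I_n -> bool}}) : R :=
  \prod_(l < k) \prod_(i < n) (if X l i then p i else 1 - p i).

Definition some_feasible m n k (A : 'M[R]_(m, n)) (b : 'I_m -> R)
    (X : {ffun 'I_k -> {ffun 'I_n -> bool}}) : bool :=
  [exists l : 'I_k, [forall j : 'I_m, b j <= rowdot A j (fun i => (X l i)%:R)]].

Definition phi m n (A : 'M[R]_(m, n)) (b : 'I_m -> R) (p : 'I_n -> R) (k : nat) : R :=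
  \sum_(X : {ffun 'I_k -> {ffun 'I_n -> bool}} | some_feasible A b X) prod_weight p X.

End Defs.

From HB Require Import structures.
From mathcomp Require Import all_boot all_order all_algebra.
From mathcomp Require Import all_classical all_reals all_analysis.
From mathcomp Require Import ring lra.
Set Implicit Arguments. Unset Strict Implicit. Unset Printing Implicit Defensive.
Import Order.TTheory GRing.Theory Num.Theory.
Local Open Scope ring_scope.

(* A sample X is infeasible only if some row j has <A_j, X> < b_j.  Hoeffding's
   lemma for a Bernoulli variable, 1 - p + p e^h <= exp (h^2/8 + h p), turns the
   Chernoff bound with parameter s = 4 gamma / eta^2 into
   Pr(<A_j, X> < b_j) <= exp (-2 gamma^2 / eta^2).  By the union bound a single
   sample is infeasible with probability q <= m exp (-2 gamma^2 / eta^2)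
   = exp (-2 (gamma^2 / eta^2 - log m / 2)), and by independence of the k
   samples phi = 1 - q^k. *)

Lemma ger0_is_derive_ndecr (R : realType) (f f' : R -> R) x y :
  (forall z : R, is_derive z 1 f (f' z)) ->
  (forall z, x <= z <= y -> 0 <= f' z) -> x <= y -> f x <= f y.
Proof.
move=> f_deriv f'_ge0 le_xy.
have f_derivable z : derivable f z 1 by exact: ex_derive.
apply: (@ger0_derive1_ndecr R f x y) => //.
- move=> z; rewrite in_itv /= => /andP[xz zy].
  by rewrite derive1E (@derive_val _ _ _ _ _ _ _ (f_deriv z)) f'_ge0 // (ltW xz) (ltW zy).
- by apply: derivable_within_continuous => z _.
Qed.

Lemma is_derive_sign_change_min (R : realType) (f f' : R -> R) a :
  (forall z : R, is_derive z 1 f (f' z)) ->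
  (forall z, z <= a -> f' z <= 0) -> (forall z, a <= z -> 0 <= f' z) ->
  forall x, f a <= f x.
Proof.
move=> f_deriv f'_le0 f'_ge0 x; have [le_ax | lt_xa] := leP a x.
  by apply: (ger0_is_derive_ndecr f_deriv) => // z /andP[/f'_ge0].
rewrite -lerN2; apply: (@ger0_is_derive_ndecr _ (- f) (fun z => - f' z) _ _ _ _ (ltW lt_xa)).
by move=> z /andP[_ /f'_le0]; rewrite oppr_ge0.
Qed.

Section HoeffdingBernoulli.
Variables (R : realType) (p : R).
Hypotheses (p_ge0 : 0 <= p) (p_le1 : p <= 1).

Definition bern_mgf (h : R) : R := 1 - p + p * expR h.

Lemma bern_mgf_gt0 h : 0 < bern_mgf h.
Proof.
rewrite /bern_mgf; have [p_lt1 | p_ge1] := ltP p 1.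
  by rewrite ltr_pwDl ?subr_gt0 // mulr_ge0 ?expR_ge0.
have -> : p = 1 by apply/le_anti; rewrite p_le1.
by rewrite subrr add0r mul1r expR_gt0.
Qed.

Lemma is_derive_bern_mgf (h : R) : is_derive h 1 bern_mgf (p * expR h).
Proof.
have -> : bern_mgf = cst (1 - p) + cst p * expR by apply/funext.
by apply: is_derive_eq; rewrite /= scaler0 addr0 add0r.
Qed.

Let tilt h := p * expR h / bern_mgf h.
Let gap h := h ^+ 2 / 8 + h * p - ln (bern_mgf h).
Let gap' h := h / 4 + p - tilt h.

Let scaleE (a b : R) : a *: b = a * b. Proof. by []. Qed.

(* gap'' = 1/4 - tilt (1 - tilt): the variance of a Bernoulli variable is at most 1/4. *)

Lemma is_derive_gap' (h : R) : is_derive h 1 gap' ((tilt h - 2^-1) ^+ 2).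
Proof.
have mgf_neq0 := lt0r_neq0 (bern_mgf_gt0 h).
have -> : gap' = id * cst 4^-1 + cst p - cst p * expR * (fun y => (bern_mgf y)^-1).
  by apply/funext.
apply: is_derive_eq; rewrite /tilt /= !scaleE.
change ((cst p * expR) h) with (p * expR h).
by field.
Qed.

Lemma is_derive_gap (h : R) : is_derive h 1 gap (gap' h).
Proof.
have mgf_gt0 := bern_mgf_gt0 h; have mgf_neq0 := lt0r_neq0 mgf_gt0.
have dln := is_derive1_comp (is_derive1_ln mgf_gt0) (is_derive_bern_mgf h).
have -> : gap = id ^+ 2 * cst 8^-1 + id * cst p - (@ln R \o bern_mgf) by apply/funext.
apply: is_derive_eq; rewrite /gap' /tilt /= !scaleE.
by field.
Qed.

Lemma bern_mgf_le (h : R) : bern_mgf h <= expR (h ^+ 2 / 8 + h * p).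
Proof.
have mgf0 : bern_mgf 0 = 1 by rewrite /bern_mgf expR0 mulr1 subrK.
have gap'0 : gap' 0 = 0 by rewrite /gap' /tilt mgf0 expR0 mulr1 divr1 mul0r add0r subrr.
have gap'_le z1 z2 : z1 <= z2 -> gap' z1 <= gap' z2.
  by apply: (ger0_is_derive_ndecr is_derive_gap') => z _; exact: sqr_ge0.
have gap_ge0 : gap 0 <= gap h.
  by apply: (is_derive_sign_change_min is_derive_gap) => z /gap'_le; rewrite gap'0.
move: gap_ge0; rewrite {1}/gap mgf0 ln1 expr0n /= !mul0r !addr0 subr0 subr_ge0 => ln_le.
by rewrite -[bern_mgf h]lnK ?ler_expR // posrE bern_mgf_gt0.
Qed.

End HoeffdingBernoulli.

Section BernoulliVector.
Variables (R : realType) (n : nat) (p : 'I_n -> R).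
Hypothesis p01 : forall i, 0 <= p i <= 1.

Definition bern_weight (x : {ffun 'I_n -> bool}) : R :=
  \prod_(i < n) (if x i then p i else 1 - p i).

Lemma bern_weight_ge0 x : 0 <= bern_weight x.
Proof.
apply: prodr_ge0 => i _; have /andP[pi_ge0 pi_le1] := p01 i.
by case: (x i); rewrite ?subr_ge0.
Qed.

Lemma sum_bern_weight : \sum_x bern_weight x = 1.
Proof.
rewrite /bern_weight -(bigA_distr_bigA (fun i (c : bool) => if c then p i else 1 - p i)).
by rewrite big1 // => i _; rewrite big_bool /= subrKC.
Qed.

Lemma bern_weight_mgf (c : 'I_n -> R) :
  \sum_x bern_weight x * expR (\sum_(i < n) c i * (x i)%:R) =
  \prod_(i < n) bern_mgf (p i) (c i).
Proof.
under eq_bigr => x _ do rewrite expR_sum -big_split /=.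
rewrite -(bigA_distr_bigA (fun i (v : bool) => (if v then p i else 1 - p i) * expR (c i * v%:R))).
by apply: eq_bigr => i _; rewrite big_bool /= mulr1 mulr0 expR0 mulr1 addrC.
Qed.

Lemma bern_weight_mgf_le (c : 'I_n -> R) :
  \sum_x bern_weight x * expR (\sum_(i < n) c i * (x i)%:R) <=
  expR (\sum_(i < n) (c i ^+ 2 / 8 + c i * p i)).
Proof.
rewrite bern_weight_mgf expR_sum; apply: ler_prod => i _.
have /andP[pi_ge0 pi_le1] := p01 i.
by rewrite ltW ?bern_mgf_gt0 ?bern_mgf_le.
Qed.

Lemma bern_weight_lt_chernoff (c : 'I_n -> R) (t s : R) : 0 <= s ->
  \sum_(x : {ffun 'I_n -> bool} | \sum_(i < n) c i * (x i)%:R < t) bern_weight x <=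
  expR (s * (t - \sum_(i < n) c i * p i) + s ^+ 2 / 8 * \sum_(i < n) c i ^+ 2).
Proof.
move=> s_ge0; set cx := fun x : {ffun 'I_n -> bool} => \sum_(i < n) c i * (x i)%:R.
have markov : \sum_(x | cx x < t) bern_weight x <=
    \sum_x bern_weight x * expR (s * (t - cx x)).
  rewrite big_mkcond; apply: ler_sum => x _; case: ifP => [cx_lt|_].
    rewrite ler_peMr ?bern_weight_ge0 // -expR0 ler_expR.
    by rewrite mulr_ge0 // subr_ge0 ltW.
  by rewrite mulr_ge0 ?bern_weight_ge0 ?expR_ge0.
have shift (x : {ffun 'I_n -> bool}) : expR (s * (t - cx x)) =
    expR (s * t) * expR (\sum_(i < n) (- (s * c i)) * (x i)%:R).
  by rewrite -expRD mulrBr mulr_sumr -sumrN; congr (expR (_ + _));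
    apply: eq_bigr => i _; rewrite mulNr mulrA.
apply: (le_trans markov); under eq_bigr => x _ do rewrite shift mulrCA.
rewrite -mulr_sumr; apply: le_trans (ler_wpM2l (expR_ge0 _) (bern_weight_mgf_le _)) _.
rewrite -expRD ler_expR.
have -> : \sum_(i < n) ((- (s * c i)) ^+ 2 / 8 + - (s * c i) * p i) =
    s ^+ 2 / 8 * \sum_(i < n) c i ^+ 2 - s * \sum_(i < n) c i * p i.
  by rewrite 2!mulr_sumr -sumrB; apply: eq_bigr => i _; ring.
by rewrite mulrBr addrA addrAC.
Qed.

Lemma bern_weight_lt_hoeffding (c : 'I_n -> R) (t g e : R) :
  0 < g -> g <= \sum_(i < n) c i * p i - t -> 0 < e -> \sum_(i < n) c i ^+ 2 <= e ^+ 2 ->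
  \sum_(x : {ffun 'I_n -> bool} | \sum_(i < n) c i * (x i)%:R < t) bern_weight x <=
  expR (- 2 * g ^+ 2 / e ^+ 2).
Proof.
move=> g_gt0 g_le e_gt0 c_le.
(* [s] minimises the exponent of the Chernoff bound. *)
pose s := 4 * g / e ^+ 2.
have s_ge0 : 0 <= s by rewrite divr_ge0 ?sqr_ge0 // mulr_ge0 // ltW.
apply: le_trans (bern_weight_lt_chernoff c t s_ge0) _; rewrite ler_expR.
have -> : - 2 * g ^+ 2 / e ^+ 2 = s * - g + s ^+ 2 / 8 * e ^+ 2.
  by rewrite /s; field; exact: lt0r_neq0.
apply: lerD; apply: ler_wpM2l => //; first lra.
by rewrite divr_ge0 ?sqr_ge0.
Qed.

End BernoulliVector.

Lemma gamma_min_le (R : realType) m n (A : 'M[R]_(m, n)) b p (j : 'I_m) :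
  gamma_min A b p <= rowdot A j p - b j.
Proof. by rewrite /gamma_min /fmin; case: pickP => [j0 _|/(_ j)//]; exact: bigmin_le. Qed.

Lemma eta_max_ge0 (R : realType) m n (A : 'M[R]_(m, n)) : 0 <= eta_max A.
Proof. exact: bigmax_ge_id. Qed.

Lemma row_sqr_norm_le (R : realType) m n (A : 'M[R]_(m, n)) (j : 'I_m) :
  \sum_(i < n) A j i ^+ 2 <= eta_max A ^+ 2.
Proof.
have row_ge0 : 0 <= \sum_(i < n) A j i ^+ 2 by apply: sumr_ge0 => i _; exact: sqr_ge0.
rewrite -(sqr_sqrtr row_ge0) lerXn2r ?nnegrE ?sqrtr_ge0 ?eta_max_ge0 //.
exact: (le_bigmax _ (fun j => Num.sqrt (\sum_(i < n) A j i ^+ 2))).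
Qed.

Section Feasibility.
Variables (R : realType) (m n : nat) (A : 'M[R]_(m, n)) (b : 'I_m -> R) (p : 'I_n -> R).
Hypothesis p01 : forall i, 0 <= p i <= 1.

Definition feasible (x : {ffun 'I_n -> bool}) : bool :=
  [forall j : 'I_m, b j <= rowdot A j (fun i => (x i)%:R)].

Definition infeasible_prob : R := \sum_(x | ~~ feasible x) bern_weight p x.

Lemma infeasible_prob_ge0 : 0 <= infeasible_prob.
Proof. by apply: sumr_ge0 => x _; exact: bern_weight_ge0. Qed.

Lemma infeasible_prob_le1 : infeasible_prob <= 1.
Proof.
rewrite -(sum_bern_weight p) [X in _ <= X](bigID feasible) /= lerDr.
by apply: sumr_ge0 => x _; exact: bern_weight_ge0.
Qed.

Lemma infeasible_prob_union_bound : infeasible_prob <=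
  \sum_(j < m) \sum_(x : {ffun 'I_n -> bool} | rowdot A j (fun i => (x i)%:R) < b j) bern_weight p x.
Proof.
rewrite (exchange_big_dep xpredT) //= [X in X <= _]big_mkcond /=.
apply: ler_sum => x _; have sum_ge0 P : 0 <= \sum_(j | P j) bern_weight p x.
  by apply: sumr_ge0 => j _; exact: bern_weight_ge0.
case: ifPn => [/forallPn[j]|_ //]; rewrite -ltNge => row_lt.
by rewrite (bigD1 j) //= lerDl.
Qed.

Lemma phi_infeasible_prob k : phi A b p k = 1 - infeasible_prob ^+ k.
Proof.
pose W (X : {ffun 'I_k -> {ffun 'I_n -> bool}}) := \prod_(l < k) bern_weight p (X l).
have total : \sum_X W X = 1.
  by rewrite /W -(bigA_distr_bigA (fun _ => bern_weight p)) big1 // => l _; exact: sum_bern_weight.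
have none_feasible : \sum_(X | ~~ some_feasible A b X) W X = infeasible_prob ^+ k.
  rewrite (eq_bigl (fun X => X \in ffun_on (predC feasible))); last first.
    by move=> X; rewrite negb_exists; apply/forallP/ffun_onP.
  by rewrite /W -(bigA_distr_big _ (fun _ => bern_weight p)) prodr_const card_ord.
(* [phi A b p k] sums [prod_weight p X], which is [W X] by conversion. *)
by rewrite -none_feasible -total (bigID (some_feasible A b)) /= addrK.
Qed.

Lemma infeasible_prob_le : 0 < gamma_min A b p -> 0 < eta_max A ->
  infeasible_prob <= m%:R * expR (- 2 * gamma_min A b p ^+ 2 / eta_max A ^+ 2).
Proof.
move=> gamma_gt0 eta_gt0; apply: (le_trans infeasible_prob_union_bound).
rewrite mulr_natl -[m in _ *+ m]card_ord -sumr_const; apply: ler_sum => j _.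
apply: bern_weight_lt_hoeffding => //; first exact: gamma_min_le.
exact: row_sqr_norm_le.
Qed.

End Feasibility.

Theorem mainTheorem7 (R : realType) (m n k : nat) (A : 'M[R]_(m, n))
    (b : 'I_m -> R) (p : 'I_n -> R)
    (hm : (0 < m)%N) (hp : forall i, 0 <= p i <= 1) :
  phi A b p k >=
  1 - expR (- (2 * k%:R) *
             pos_part (pos_part (gamma_min A b p) ^+ 2 / eta_max A ^+ 2
                       - ln (m%:R) / 2)).
Proof.
set gamma := gamma_min A b p; set eta := eta_max A.
set B := pos_part gamma ^+ 2 / eta ^+ 2 - ln (m%:R) / 2.
suff q_le : infeasible_prob A b p <= expR (- 2 * pos_part B).
  rewrite phi_infeasible_prob lerD2l lerN2.
  have -> : - (2 * k%:R) * pos_part B = k%:R * (- 2 * pos_part B) by ring.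
  by rewrite expRM_natl lerXn2r ?nnegrE ?infeasible_prob_ge0 ?expR_ge0.
have [B_le0 | B_gt0] := leP B 0.
  by rewrite /pos_part max_r // mulr0 expR0 infeasible_prob_le1.
have ln_m_ge0 : 0 <= ln (m%:R : R) by rewrite ln_ge0 // ler1n.
have ratio_gt0 : 0 < pos_part gamma ^+ 2 / eta ^+ 2 by rewrite /B in B_gt0; lra.
have gamma_gt0 : 0 < gamma.
  rewrite ltNge; apply: contraTN ratio_gt0 => gamma_le0.
  by rewrite /pos_part max_r // expr0n mul0r ltxx.
have eta_gt0 : 0 < eta.
  rewrite lt_neqAle eta_max_ge0 andbT; apply: contraTN ratio_gt0 => /eqP <-.
  by rewrite expr0n invr0 mulr0 ltxx.
rewrite {1}/pos_part (max_l (ltW B_gt0)).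
apply: (le_trans (infeasible_prob_le hp gamma_gt0 eta_gt0)).
rewrite -[m%:R]lnK ?posrE ?ltr0n // -expRD ler_expR /B /pos_part (max_l (ltW gamma_gt0)).
by rewrite -/gamma -/eta; lra.
Qed.
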